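(* Let $(\mathcal G_A,p^A)$ and $(\mathcal G_B,p^B)$ be CPS's on the finite set $\Omega$ (satisfying the standing assumptions), each of which satisfies certainty reflection and is $1$-closed. Fix an event $E\subseteq\Omega$, a state $\omega\in\Omega$, and numbers $q_A,q_B\in[0,1]$. If $\omega\in C^\infty$ (i.e., it is common certainty at $\omega$ that Alice assigns probability $q_A$ to $E$ and Bob assigns probability $q_B$ to $E$) and local consistency holds at $\omega$, then $q_A=q_B$.
   Context: $\Omega$ is a finite set; every subset of $\Omega$ is an event. A conditional probability space (CPS) is a pair $(\mathcal G,p)$ where $\mathcal G$ is a family of nonempty subsets of $\Omega$ and $p$ assigns to each $G\in\mathcal G$ a probability measure $p_G$ on $\Omega$ such that (i) $p_G(G)=1$ for all $G\in\mathcal G$, and (ii) $p_G(E)=p_G(F)\,p_F(E)$ whenever $E\subseteq F\subseteq G$, $E\subseteq\Omega$, $F,G\in\mathcal G$. Standing assumption: every conditioning family $\mathcal G$ is closed under unions and under nonempty intersections (if $G,H\in\mathcal G$ then $G\cup H\in\mathcal G$, and $G\cap H\in\mathcal G$ whenever $G\cap H\neq\emptyset$) and covers $\Omega$ (every $\omega$ lies in some member). For a CPS $(\mathcal G_i,p^i)$ and $\omega\in\Omega$, the atom $m_i(\omega)=\bigcap\{G\in\mathcal G_i:\omega\in G\}$; it is nonempty and belongs to $\mathcal G_i$. The CPS $(\mathcal G_i,p^i)$ is $1$-closed if every $L\subseteq\Omega$ such that $L\subseteq G$ and $p^i_G(L)=1$ for some $G\in\mathcal G_i$ belongs to $\mathcal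 G_i$. It satisfies certainty reflection if for every event $E$, every $q\in[0,1]$ and every $\omega$: $p^i_{m_i(\omega)}(E)=q$ implies $p^i_{m_i(\omega)}(\{\omega'\in\Omega: p^i_{m_i(\omega')}(E)=q\})=1$. For agents $i=A,B$ and an event $F$, $C_i(F)=\{\omega: p^i_{m_i(\omega)}(F)=1\}$. Given $E$ and $q_A,q_B$, define $A^0=\{\omega:p^A_{m_A(\omega)}(E)=q_A\}$, $B^0=\{\omega:p^B_{m_B(\omega)}(E)=q_B\}$, $A^{n+1}=A^n\cap C_A(B^n)$, $B^{n+1}=B^n\cap C_B(A^n)$ for $n\ge0$, and $C^\infty=\bigcap_{n\ge0}A^n\cap\bigcap_{n\ge0}B^n$. Let $m(\omega)$ denote the intersection of all members of $\mathcal G_A\cap\mathcal G_B$ containing $\omega$ (note $\Omega\in\mathcal G_A\cap\mathcal G_B$). Local consistency holds at $\omega$ if $p^A_{m(\omega)}=p^B_{m(\omega)}$. *)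

(* Omega is a finite type T; probabilities take values in a
   real field R. A probability measure on T is given by its point masses. *)
From HB Require Import structures.
From mathcomp Require Import all_boot all_order all_algebra.
Set Implicit Arguments. Unset Strict Implicit. Unset Printing Implicit Defensive.
Import Order.TTheory GRing.Theory Num.Theory.
Local Open Scope ring_scope.

Section CPS.
Variables (T : finType) (R : realFieldType).

Definition Pr (mu : {ffun T -> R}) (E : {set T}) : R := \sum_(x in E) mu x.

Definition is_prob (mu : {ffun T -> R}) : Prop :=
  (forall x, 0 <= mu x) /\ \sum_x mu x = 1.

(* A conditional probability space (Gs, p): p G is the measure p_G,
   meaningful only for G \in Gs. *)
Definition is_CPS (Gs : {set {set T}}) (p : {set T} -> {ffun T -> R}) : Prop :=
  [/\ (forall G, G \in Gs -> G != set0),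
      (forall G, G \in Gs -> is_prob (p G)),
      (forall G, G \in Gs -> Pr (p G) G = 1) &
      (forall (E F G : {set T}), F \in Gs -> G \in Gs ->
          E \subset F -> F \subset G -> Pr (p G) E = Pr (p G) F * Pr (p F) E)].

Definition standing (Gs : {set {set T}}) : Prop :=
  [/\ (forall G H, G \in Gs -> H \in Gs -> G :|: H \in Gs),
      (forall G H, G \in Gs -> H \in Gs -> G :&: H != set0 -> G :&: H \in Gs) &
      (forall w : T, exists2 G, G \in Gs & w \in G)].

Definition atom (Gs : {set {set T}}) (w : T) : {set T} :=
  \bigcap_(G in Gs | w \in G) G.

Definition one_closed (Gs : {set {set T}}) (p : {set T} -> {ffun T -> R}) : Prop :=
  forall (L G : {set T}), G \in Gs -> L \subset G -> Pr (p G) L = 1 -> L \in Gs.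

Definition certainty_reflection (Gs : {set {set T}})
    (p : {set T} -> {ffun T -> R}) : Prop :=
  forall (E : {set T}) (q : R) (w : T), 0 <= q <= 1 ->
    Pr (p (atom Gs w)) E = q ->
    Pr (p (atom Gs w)) [set w' | Pr (p (atom Gs w')) E == q] = 1.

Definition Cert (Gs : {set {set T}}) (p : {set T} -> {ffun T -> R})
    (F : {set T}) : {set T} :=
  [set w | Pr (p (atom Gs w)) F == 1].

Section Iter.
Variables (GA GB : {set {set T}}) (pA pB : {set T} -> {ffun T -> R})
          (E : {set T}) (qA qB : R).

Fixpoint AB (n : nat) : {set T} * {set T} :=
  match n with
  | 0 => ([set w | Pr (pA (atom GA w)) E == qA],
          [set w | Pr (pB (atom GB w)) E == qB])
  | n'.+1 => let: (An, Bn) := AB n' in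
             (An :&: Cert GA pA Bn, Bn :&: Cert GB pB An)
  end.

Definition in_Cinf (w : T) : Prop :=
  forall n, w \in (AB n).1 /\ w \in (AB n).2.
End Iter.

Definition meet_atom (GA GB : {set {set T}}) (w : T) : {set T} :=
  \bigcap_(G in GA :&: GB | w \in G) G.

Definition local_consistency (GA GB : {set {set T}})
    (pA pB : {set T} -> {ffun T -> R}) (w : T) : Prop :=
  pA (meet_atom GA GB w) = pB (meet_atom GA GB w).

End CPS.

(* The set of states that are in C^oo and in the meet atom M = m(w) is, by
   1-closedness and local consistency, a union of Alice-atoms and of
   Bob-atoms containing w, hence a common conditioning event containing w;
   so it is all of M. Inside M every agent's atom then assigns E the agent's
   value, and a conditional probability that is constant on the atoms of a
   conditioning event is also its value on the event itself. Since Alice and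
   Bob share p_M, q_A = p_M(E) = q_B. *)

From HB Require Import structures.
From mathcomp Require Import all_boot all_order all_algebra.
From mathcomp Require Import boolp.
Import Order.TTheory GRing.Theory Num.Theory.
Local Open Scope ring_scope.
Set Implicit Arguments. Unset Strict Implicit. Unset Printing Implicit Defensive.

Section Probability.
Variables (T : finType) (R : realFieldType) (mu : {ffun T -> R}).
Hypothesis mu_prob : is_prob mu.
Implicit Types X Y G : {set T}.

Definition supp : {set T} := [set x | 0 < mu x].

Lemma Pr_setID X Y : Pr mu X = Pr mu (X :&: Y) + Pr mu (X :\: Y).
Proof. exact: big_setID. Qed.

Lemma Pr_setT : Pr mu setT = 1.
Proof. by case: mu_prob => _ <-; apply: eq_bigl => x; rewrite inE. Qed.

Lemma mem_of_Pr1 X u : Pr mu X = 1 -> 0 < mu u -> u \in X.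
Proof.
move=> X1 u_pos; apply: contraTT u_pos => uNX; rewrite -leNgt.
have : Pr mu X + mu u <= 1.
  rewrite -Pr_setT (Pr_setID setT X) setTI lerD2l /Pr (bigD1 u) ?inE ?uNX //=.
  by rewrite lerDl; apply: sumr_ge0 => x _; case: mu_prob.
by rewrite X1 -{2}[1]addr0 lerD2l.
Qed.

Lemma mass_out_of_Pr1 X x : Pr mu X = 1 -> x \notin X -> mu x = 0.
Proof.
move=> X1 xNX; apply/eqP; rewrite eq_le (proj1 mu_prob) andbT leNgt.
by apply: contra xNX; apply: mem_of_Pr1.
Qed.

Lemma Pr_setIr1 X G : Pr mu G = 1 -> Pr mu (X :&: G) = Pr mu X.
Proof.
move=> G1; rewrite [RHS](Pr_setID X G) [Pr mu (_ :\: _)]big1 ?addr0 // => x.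
by rewrite inE => /andP[xNG _]; apply: mass_out_of_Pr1 G1 xNG.
Qed.

Lemma Pr1_sub G X : Pr mu G = 1 -> G \subset X -> Pr mu X = 1.
Proof. by move=> G1 GX; rewrite -(Pr_setIr1 X G1) (setIidPr GX). Qed.

Lemma Pr_supp : Pr mu supp = 1.
Proof.
rewrite -Pr_setT (Pr_setID setT supp) setTI [Pr mu (_ :\: _)]big1 ?addr0 //.
move=> x; rewrite !inE andbT -leNgt => x_le0.
by apply/eqP; rewrite eq_le x_le0 (proj1 mu_prob).
Qed.

End Probability.

Section Atoms.
Variables (T : finType) (Gs : {set {set T}}).

Lemma mem_atom y : y \in atom Gs y.
Proof. by apply/bigcapP => G /andP[]. Qed.

Lemma atom_min G y : G \in Gs -> y \in G -> atom Gs y \subset G.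
Proof. by move=> GGs yG; apply: bigcap_inf; rewrite GGs yG. Qed.

Lemma bigcup_closed (I : finType) (P : pred I) (F : I -> {set T}) :
    (forall G H, G \in Gs -> H \in Gs -> G :|: H \in Gs) ->
    (exists i, P i) -> (forall i, P i -> F i \in Gs) ->
  \bigcup_(i | P i) F i \in Gs.
Proof.
move=> GsU [i0 Pi0] FGs.
have : (\bigcup_(i | P i) F i == set0) || (\bigcup_(i | P i) F i \in Gs).
  apply: (big_ind (fun X => (X == set0) || (X \in Gs))); first by rewrite eqxx.
    move=> X Y /orP[/eqP-> | XGs] /orP[/eqP-> | YGs];
      by rewrite ?set0U ?setU0 ?eqxx ?XGs ?YGs ?GsU ?orbT.
  by move=> i Pi; rewrite FGs ?orbT.
case/orP=> [/eqP U0 | //].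
have : F i0 \subset set0 by rewrite -U0 (bigcup_sup i0).
by rewrite subset0 => /eqP F0; rewrite U0 -F0 FGs.
Qed.

Lemma setT_standing (w : T) : standing Gs -> [set: T] \in Gs.
Proof.
case=> GsU _ cover.
have -> : [set: T] = \bigcup_(G in Gs) G.
  apply/eqP; rewrite eqEsubset subsetT andbT; apply/subsetP => y _.
  by have [G GGs yG] := cover y; apply/bigcupP; exists G.
by apply: bigcup_closed => //; have [G GGs _] := cover w; exists G.
Qed.

Lemma atom_standing y : standing Gs -> atom Gs y \in Gs.
Proof.
move=> sGs; have [_ GsI _] := sGs.
suff /andP[] : (atom Gs y \in Gs) && (y \in atom Gs y) by [].
apply: (big_ind (fun X : {set T} => (X \in Gs) && (y \in X))).
- by rewrite (setT_standing y sGs) inE.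
- move=> X Y /andP[XGs yX] /andP[YGs yY].
  have yXY : y \in X :&: Y by rewrite inE yX yY.
  by rewrite yXY andbT GsI //; apply/set0Pn; exists y.
- by [].
Qed.

Lemma atom_sub_atom x y : standing Gs -> x \in atom Gs y ->
  atom Gs x \subset atom Gs y.
Proof. by move=> sGs; apply: atom_min; apply: atom_standing. Qed.

Lemma mem_of_atom_closed K : standing Gs -> K != set0 ->
  (forall y, y \in K -> atom Gs y \subset K) -> K \in Gs.
Proof.
move=> sGs /set0Pn[y0 y0K] Kclosed; have [GsU _ _] := sGs.
have -> : K = \bigcup_(y in K) atom Gs y.
  apply/eqP; rewrite eqEsubset; apply/andP; split; last exact/bigcupsP.
  by apply/subsetP => y yK; apply/bigcupP; exists y => //; apply: mem_atom.
by apply: bigcup_closed => [//||y _]; [exists y0 | apply: atom_standing].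
Qed.

End Atoms.

Lemma standingI (T : finType) (GA GB : {set {set T}}) :
  standing GA -> standing GB -> standing (GA :&: GB).
Proof.
move=> sA sB; have [UA IA _] := sA; have [UB IB _] := sB; split.
- by move=> G H /setIP[GinA GinB] /setIP[HinA HinB]; rewrite inE UA ?UB.
- by move=> G H /setIP[GinA GinB] /setIP[HinA HinB] n0; rewrite inE IA ?IB.
- by move=> y; exists setT; rewrite ?inE ?(setT_standing y sA) ?(setT_standing y sB).
Qed.

Section DownClosed.
Variables (T : finType) (V : zmodType) (m : T -> {set T}) (d : T -> V).
Hypothesis m_refl : forall y, y \in m y.
Hypothesis m_trans : forall x y, x \in m y -> m x \subset m y.

Definition down_closed (X : {set T}) := forall y, y \in X -> m y \subset X.

Lemma down_closedD_class X y : down_closed X -> y \in X ->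
    (forall z, z \in X -> #|m z| <= #|m y|)%N ->
  down_closed (X :\: [set z | m z == m y]).
Proof.
move=> Xdown yX ymax z; rewrite !inE => /andP[mzNy zX].
apply/subsetP => v vz; rewrite !inE (subsetP (Xdown z zX)) // andbT.
apply: contra mzNy => /eqP mvy.
have mymz : m y \subset m z by rewrite -mvy; apply: m_trans.
by rewrite eq_sym eqEcard mymz ymax.
Qed.

(* Peel off the class of an element with a maximal principal down-set:
   both what remains and that down-set minus the class are down-closed. *)
Lemma sum_down_closed_eq0 X : down_closed X ->
    (forall y, y \in X -> \sum_(x in m y) d x = 0) ->
  \sum_(x in X) d x = 0.
Proof.
elim: {X}#|X|.+1 {-2}X (ltnSn #|X|) => // n IH X ltXn Xdown hm.
have [-> | [y yX]] := set_0Vmem X; first by rewrite big_set0.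
case: (arg_maxnP (fun z => #|m z|) yX) => z zX zmax.
set C := [set v | m v == m z].
have Cz : C \subset m z by apply/subsetP => v; rewrite inE => /eqP <-; apply: m_refl.
have CX : C \subset X := subset_trans Cz (Xdown z zX).
have zC : z \in C by rewrite inE.
have smaller (A : {set T}) : A \subset X -> z \notin A -> (#|A| < n)%N.
  move=> AX zNA; rewrite -ltnS (leq_trans _ ltXn) // ltnS; apply: proper_card.
  by apply/properP; split => //; exists z.
have sum_mzDC : \sum_(x in m z :\: C) d x = 0.
  apply: IH.
  - apply: smaller; last by rewrite inE zC.
    exact: subset_trans (subsetDl _ _) (Xdown z zX).
  - by apply: down_closedD_class => // [v|v /m_trans /subset_leq_card];
      [apply: m_trans |].
  - by move=> v /setDP[/(subsetP (Xdown z zX)) vX _]; apply: hm.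
have sumC : \sum_(x in C) d x = 0.
  by move: (hm z zX); rewrite (big_setID C) /= (setIidPr Cz) sum_mzDC addr0.
rewrite (big_setID C) /= (setIidPr CX) sumC add0r; apply: IH.
- by apply: smaller; [apply: subsetDl | rewrite inE zC].
- exact: down_closedD_class.
- by move=> v /setDP[vX _]; apply: hm.
Qed.

End DownClosed.

Section ConditionalProbability.
Variables (T : finType) (R : realFieldType).
Variables (Gs : {set {set T}}) (p : {set T} -> {ffun T -> R}).
Hypotheses (sGs : standing Gs) (cGs : is_CPS Gs p).
Implicit Types M E G X : {set T}.

Lemma Pr_self G : G \in Gs -> Pr (p G) G = 1.
Proof. by have [_ _ one _] := cGs; apply: one. Qed.

Lemma is_prob_CPS G : G \in Gs -> is_prob (p G).
Proof. by have [_ prob _ _] := cGs; apply: prob. Qed.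

Lemma Pr_setI_self E G : G \in Gs -> Pr (p G) (E :&: G) = Pr (p G) E.
Proof. by move=> GGs; exact (Pr_setIr1 (is_prob_CPS GGs) E (Pr_self GGs)). Qed.

Lemma Pr_supp_self G : G \in Gs -> Pr (p G) (G :&: supp (p G)) = 1.
Proof.
move=> GGs; rewrite (Pr_setIr1 (is_prob_CPS GGs)) ?Pr_self //.
exact/Pr_supp/is_prob_CPS.
Qed.

Lemma mass_atom_mul M y u : M \in Gs -> y \in M -> u \in atom Gs y ->
  p M u = Pr (p M) (atom Gs y) * p (atom Gs y) u.
Proof.
move=> MGs yM uy; have [_ _ _ chain] := cGs.
have := chain [set u] (atom Gs y) M (atom_standing y sGs) MGs.
by rewrite /Pr !big_set1; apply; rewrite ?sub1set ?atom_min.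
Qed.

Lemma supp_mem G : one_closed Gs p -> G \in Gs -> G :&: supp (p G) \in Gs.
Proof. by move=> oc GGs; apply: oc GGs (subsetIl _ _) (Pr_supp_self GGs). Qed.

(* The weight d x = p_M(x) (1_E(x) - q) has zero sum on each atom inside M;
   M is down-closed for the preorder "x lies in the atom of y". *)
Lemma Pr_atoms_const M E q : M \in Gs ->
    (forall y, y \in M -> Pr (p (atom Gs y)) E = q) ->
  Pr (p M) E = q.
Proof.
move=> MGs hq; have [_ _ _ chain] := cGs.
pose d x := (x \in E)%:R * p M x - q * p M x.
have sum_d X : \sum_(x in X) d x = Pr (p M) (E :&: X) - q * Pr (p M) X.
  rewrite sumrB -mulr_sumr; congr (_ - _).
  rewrite (eq_bigr (fun x => if x \in E then p M x else 0)) => [|x _]; last first.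
    by case: (x \in E); rewrite ?mul1r ?mul0r.
  by rewrite -big_mkcondr; apply: eq_bigl => x; rewrite !inE andbC.
have : \sum_(x in M) d x = 0.
  apply: (sum_down_closed_eq0 (@mem_atom _ Gs)).
  - by move=> x y; apply: atom_sub_atom.
  - by move=> y; apply: atom_min.
  move=> y yM; have yGs := atom_standing y sGs.
  rewrite sum_d (chain _ _ _ yGs MGs (subsetIr _ _) (atom_min MGs yM)).
  by rewrite Pr_setI_self // hq // mulrC subrr.
rewrite sum_d Pr_setI_self // Pr_self // mulr1.
by move/eqP; rewrite subr_eq0 => /eqP.
Qed.

(* M :&: C is a union of atoms: a state of the atom of y in M :&: C lying
   outside C has positive p_M-mass, hence, by the chain rule through the
   atom, positive mass under the atom, which forces it into C. *)
Lemma setI_propagating_mem M C w : M \in Gs -> w \in M :&: C ->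
    (forall u, u \in M -> u \notin C -> 0 < p M u) ->
    (forall y u, y \in C -> 0 < p (atom Gs y) u -> u \in C) ->
  M :&: C \in Gs.
Proof.
move=> MGs wMC Mpos Cprop.
apply: (mem_of_atom_closed sGs); first by apply/set0Pn; exists w.
move=> y /setIP[yM yC]; have yGs := atom_standing y sGs.
apply/subsetP => u uy; have uM := subsetP (atom_min MGs yM) u uy.
rewrite inE uM /=; apply: contraT => uNC.
suff u_pos : 0 < p (atom Gs y) u by rewrite (Cprop y u yC u_pos) in uNC.
rewrite lt_def (proj1 (is_prob_CPS yGs)) andbT.
apply: contraTneq (Mpos u uM uNC) => u0.
by rewrite (mass_atom_mul MGs yM uy) u0 mulr0 ltxx.
Qed.

End ConditionalProbability.

Section CommonCertainty.
Variables (T : finType) (R : realFieldType).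
Variables (GA GB : {set {set T}}) (pA pB : {set T} -> {ffun T -> R}).
Variables (E : {set T}) (qA qB : R).

Lemma AB_S n :
  AB GA GB pA pB E qA qB n.+1 =
  ((AB GA GB pA pB E qA qB n).1 :&: Cert GA pA (AB GA GB pA pB E qA qB n).2,
   (AB GA GB pA pB E qA qB n).2 :&: Cert GB pB (AB GA GB pA pB E qA qB n).1).
Proof. by rewrite /=; case: (AB GA GB pA pB E qA qB n). Qed.

Lemma AB_swap n :
  AB GB GA pB pA E qB qA n =
  ((AB GA GB pA pB E qA qB n).2, (AB GA GB pA pB E qA qB n).1).
Proof.
by elim: n => [//|n /= ->]; case: (AB GA GB pA pB E qA qB n).
Qed.

Lemma in_Cinf_swap u :
  in_Cinf GB GA pB pA E qB qA u -> in_Cinf GA GB pA pB E qA qB u.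
Proof. by move=> h n; have := h n; rewrite AB_swap => -[]. Qed.

(* Since z is in every A^(n+1), its atom is certain of every B^n; by
   1-closedness the atom of u lies in the support of p^A_(m_A z), which
   gives u in every A^n by induction, certainty reflection starting it. *)
Lemma in_Cinf_of_massA z u :
    standing GA -> is_CPS GA pA -> certainty_reflection GA pA ->
    one_closed GA pA -> 0 <= qA <= 1 ->
    (forall n, z \in (AB GA GB pA pB E qA qB n).1) ->
    0 < pA (atom GA z) u ->
  in_Cinf GA GB pA pB E qA qB u.
Proof.
move=> sA cA cr oc qA01 zA u_pos.
set mz := atom GA z; have mzA : mz \in GA := atom_standing z sA.
have mz_prob := is_prob_CPS cA mzA.
have posB x n : 0 < pA mz x -> x \in (AB GA GB pA pB E qA qB n).2.
  have := zA n.+1; rewrite AB_S inE => /andP[_]; rewrite inE => /eqP.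
  exact: mem_of_Pr1.
have uS : u \in mz :&: supp (pA mz).
  by rewrite !inE u_pos (mem_of_Pr1 mz_prob (Pr_self cA mzA)).
have muS := atom_min (supp_mem cA oc mzA) uS.
have muA := atom_standing u sA.
suff uA n : u \in (AB GA GB pA pB E qA qB n).1 by move=> n; split; [|apply: posB].
elim: n => [|n IH].
  have := zA 0; rewrite /= inE => /eqP /(cr E qA z qA01) zcert.
  by have := mem_of_Pr1 mz_prob zcert u_pos; rewrite !inE.
rewrite AB_S inE IH inE; apply/eqP/(Pr1_sub (is_prob_CPS cA muA) (Pr_self cA muA)).
apply: subset_trans muS _; apply/subsetP => x /setIP[_]; rewrite inE.
exact: posB.
Qed.

End CommonCertainty.

Lemma in_Cinf_of_massB (T : finType) (R : realFieldType)
    (GA GB : {set {set T}}) (pA pB : {set T} -> {ffun T -> R})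
    (E : {set T}) (qA qB : R) z u :
    standing GB -> is_CPS GB pB -> certainty_reflection GB pB ->
    one_closed GB pB -> 0 <= qB <= 1 ->
    (forall n, z \in (AB GA GB pA pB E qA qB n).2) ->
    0 < pB (atom GB z) u ->
  in_Cinf GA GB pA pB E qA qB u.
Proof.
move=> sB cB cr oc qB01 zB u_pos; apply: in_Cinf_swap.
by apply: in_Cinf_of_massA u_pos => // n; rewrite AB_swap; apply: zB.
Qed.

Section TwoAgents.
Variables (T : finType) (R : realFieldType).
Variables (GA GB : {set {set T}}) (pA pB : {set T} -> {ffun T -> R}) (w : T).
Hypotheses (sA : standing GA) (sB : standing GB).
Hypotheses (cA : is_CPS GA pA) (cB : is_CPS GB pB).
Hypotheses (ocA : one_closed GA pA) (ocB : one_closed GB pB).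
Hypothesis lc : local_consistency GA GB pA pB w.

Lemma meet_atom_mem : meet_atom GA GB w \in GA :&: GB.
Proof. exact: atom_standing (standingI sA sB). Qed.

(* Removing the p_M-null states other than w from M leaves an event certain
   for both agents, which contains w and therefore all of M = m(w). *)
Lemma meet_atom_mass_pos u : u \in meet_atom GA GB w -> u != w ->
  0 < pA (meet_atom GA GB w) u.
Proof.
move=> uM uw; have /setIP[MA MB] := meet_atom_mem.
set M := meet_atom GA GB w in uM MA MB *; have lcM : pA M = pB M := lc.
set L := M :&: ([set w] :|: supp (pA M)).
have L1 : Pr (pA M) L = 1.
  apply: (Pr1_sub (is_prob_CPS cA MA) (Pr_supp_self cA MA)).
  by rewrite setIS ?subsetUr.
have LA : L \in GA := ocA MA (subsetIl _ _) L1.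
have LB : L \in GB by apply: ocB MB (subsetIl _ _) _; rewrite -lcM.
have LAB : L \in GA :&: GB by rewrite inE LA LB.
have wL : w \in L by rewrite !inE eqxx mem_atom.
have := subsetP (atom_min LAB wL) u uM.
by case/setIP => _; rewrite !inE (negbTE uw).
Qed.

Lemma meet_atom_sub_Cinf (E : {set T}) (qA qB : R) :
    certainty_reflection GA pA -> certainty_reflection GB pB ->
    0 <= qA <= 1 -> 0 <= qB <= 1 -> in_Cinf GA GB pA pB E qA qB w ->
  forall y, y \in meet_atom GA GB w -> in_Cinf GA GB pA pB E qA qB y.
Proof.
move=> crA crB qA01 qB01 w_inf; have /setIP[MA MB] := meet_atom_mem.
set M := meet_atom GA GB w in MA MB *; have lcM : pA M = pB M := lc.
pose C := [set y | `[< in_Cinf GA GB pA pB E qA qB y >]].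
have wMC : w \in M :&: C by rewrite !inE mem_atom; apply/asboolP.
have Mpos u : u \in M -> u \notin C -> 0 < pA M u.
  move=> uM uNC; apply: meet_atom_mass_pos uM _.
  by apply: contraNneq uNC => ->; case/setIP: wMC.
have MC_A : M :&: C \in GA.
  apply: (setI_propagating_mem sA cA MA wMC Mpos) => y u.
  rewrite !inE => /asboolP y_inf u_pos; apply/asboolP.
  by apply: in_Cinf_of_massA u_pos => // n; case: (y_inf n).
have MC_B : M :&: C \in GB.
  apply: (setI_propagating_mem sB cB MB wMC) => [u uM uNC | y u].
    by rewrite -lcM Mpos.
  rewrite !inE => /asboolP y_inf u_pos; apply/asboolP.
  by apply: in_Cinf_of_massB u_pos => // n; case: (y_inf n).
have MCAB : M :&: C \in GA :&: GB by rewrite inE MC_A MC_B.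
move=> y /(subsetP (subset_trans (atom_min MCAB wMC) (subsetIr _ _))).
by rewrite inE => /asboolP.
Qed.

End TwoAgents.

Theorem theorem1 (T : finType) (R : realFieldType)
    (GA GB : {set {set T}}) (pA pB : {set T} -> {ffun T -> R})
    (E : {set T}) (w : T) (qA qB : R) :
  standing GA -> standing GB ->
  is_CPS GA pA -> is_CPS GB pB ->
  certainty_reflection GA pA -> certainty_reflection GB pB ->
  one_closed GA pA -> one_closed GB pB ->
  0 <= qA <= 1 -> 0 <= qB <= 1 ->
  in_Cinf GA GB pA pB E qA qB w ->
  local_consistency GA GB pA pB w ->
  qA = qB.
Proof.
move=> sA sB cA cB crA crB ocA ocB qA01 qB01 w_inf lc.
have /setIP[MA MB] := meet_atom_mem w sA sB.
have Minf := meet_atom_sub_Cinf sA sB cA cB ocA ocB lc crA crB qA01 qB01 w_inf.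
have <- : Pr (pA (meet_atom GA GB w)) E = qA.
  apply: (Pr_atoms_const sA cA MA) => y /Minf /(_ 0) [+ _].
  by rewrite inE => /eqP.
have <- : Pr (pB (meet_atom GA GB w)) E = qB.
  apply: (Pr_atoms_const sB cB MB) => y /Minf /(_ 0) [_ +].
  by rewrite inE => /eqP.
by rewrite lc.
Qed.
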